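(* Let $R\in(-1,1)^{M+1}$, $T_n=\sqrt{1-R_n^2}$, and let $\mathsf{p}\in\mathsf{S}_M$ with $(k,b)=(\kappa(\mathsf{p}),\beta(\mathsf{p}))$. Then $$w(\mathsf{p})=(-R)^{\tilde k-b}R^{k-b}T^{2b}.$$
   Context: Scattering sequences: $\mathsf{S}_M$ ($M\ge1$) is the set of integer sequences $\mathsf{p}=(i_0,\ldots,i_L)$ with $L\ge2$, $i_0=i_L=-1$, $i_j\in\{0,\ldots,M\}$ for $1\le j\le L-1$, and $|i_{j+1}-i_j|=1$ for all $j$. $\kappa(\mathsf{p})=(k_0,\ldots,k_M)$: $k_n$ is the number of maximal blocks of consecutive indices $j\in\{0,\ldots,L\}$ with $i_j\ge n$; $\beta(\mathsf{p})=(b_0,\ldots,b_M)$: $b_n$ is the number of those blocks containing at least two indices. Weight: for $1\le j\le L-1$ with $i_j=m$, set $w_j=R_m$ if $i_{j-1}=i_{j+1}=m-1$; $w_j=-R_m$ if $i_{j-1}=i_{j+1}=m+1$; $w_j=\sqrt{1-R_m^2}$ otherwise; $w(\mathsf{p})=\prod_{j=1}^{L-1}w_j$. $\tilde k=(k_1,\ldots,k_M,0)$. Multi-index powers: $S^d=\prod_{n=0}^M S_n^{d_n}$. *)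

From Stdlib Require Import Reals ZArith List Bool.
Import ListNotations.
Local Open Scope bool_scope.
Open Scope R_scope.

Definition scattering_seq (M : nat) (p : list Z) : Prop :=
  (3 <= length p)%nat /\
  hd 0%Z p = (-1)%Z /\
  last p 0%Z = (-1)%Z /\
  (forall j, (1 <= j < length p - 1)%nat ->
      (0 <= nth j p 0%Z <= Z.of_nat M)%Z) /\
  (forall j, (j + 1 < length p)%nat ->
      Z.abs (nth (j + 1) p 0%Z - nth j p 0%Z) = 1%Z).

(* Lengths of the maximal blocks of consecutive entries with value >= n,
   scanning left to right; [cur] is the length of the current open block. *)
Fixpoint block_lengths (n : Z) (l : list Z) (cur : nat) : list nat :=
  match l with
  | [] => if Nat.eqb cur 0 then [] else [cur]
  | x :: t =>
      if Z.leb n x then block_lengths n t (S cur)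
      else if Nat.eqb cur 0 then block_lengths n t 0
           else cur :: block_lengths n t 0
  end.

Definition kappa (p : list Z) (n : nat) : nat :=
  length (block_lengths (Z.of_nat n) p 0).

Definition beta (p : list Z) (n : nat) : nat :=
  length (filter (fun c => Nat.leb 2 c) (block_lengths (Z.of_nat n) p 0)).

Definition kappa_tilde (M : nat) (p : list Z) (n : nat) : nat :=
  if Nat.ltb n M then kappa p (S n) else 0%nat.

(* local weight w_j given i_{j-1} = a, i_j = m, i_{j+1} = c *)
Definition wloc (Rc : nat -> R) (a m c : Z) : R :=
  let r := Rc (Z.to_nat m) in
  if Z.eqb a (m - 1) && Z.eqb c (m - 1) then r
  else if Z.eqb a (m + 1) && Z.eqb c (m + 1) then - r
  else sqrt (1 - r ^ 2).

Fixpoint wprod (Rc : nat -> R) (prev : Z) (l : list Z) : R :=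
  match l with
  | x :: ((y :: _) as t) => wloc Rc prev x y * wprod Rc x t
  | _ => 1
  end.

Definition weight (Rc : nat -> R) (p : list Z) : R :=
  match p with
  | [] => 1
  | a :: t => wprod Rc a t
  end.

Definition prod_0_M (M : nat) (f : nat -> R) : R :=
  fold_right (fun n acc => f n * acc) 1 (seq 0 (S M)).

Definition Tc (Rc : nat -> R) (n : nat) : R := sqrt (1 - Rc n ^ 2).

(* (-R)^(tilde k - b) R^(k - b) T^(2b), exponents in Z (no truncation) *)
Definition rhs (M : nat) (Rc : nat -> R) (p : list Z) : R :=
  prod_0_M M (fun n =>
    powerRZ (- Rc n) (Z.of_nat (kappa_tilde M p n) - Z.of_nat (beta p n)) *
    powerRZ (Rc n) (Z.of_nat (kappa p n) - Z.of_nat (beta p n)) *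
    powerRZ (Tc Rc n) (2 * Z.of_nat (beta p n))).

From Stdlib Require Import Reals ZArith List Lia Bool.
Import ListNotations.
Open Scope R_scope.

(* Every interior index j with i_j = z is of one of four kinds, according to its
   neighbours: a peak (z-1, z, z-1), contributing R_z; a valley (z+1, z, z+1),
   contributing -R_z; a rise (z-1, z, z+1) or a fall (z+1, z, z-1), each
   contributing T_z.  Hence w(p) = prod_z (-R_z)^V_z R_z^P_z T_z^(U_z + D_z),
   where V, P, U, D count valleys, peaks, rises and falls at level z.

   On the other side, the blocks of indices with i_j >= z are entered by the up
   steps z-1 -> z, so k_z is the number of such steps, and a block is long exactly
   when its first index is a rise, so b_z = U_z.  Classifying each up step into z
   by the next entry gives k_z = P_z + U_z; classifying each up step into z+1 by
   the previous entry gives k_(z+1) = V_z + U_z (and k_(M+1) = 0 = tilde k_M);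
   finally a path starting and ending below z crosses level z as often upwards as
   downwards, and classifying the down steps gives D_z = U_z. *)

Section Paths.
Local Open Scope Z_scope.

Fixpoint unit_steps (l : list Z) : Prop :=
  match l with
  | x :: ((y :: _) as t) => Z.abs (y - x) = 1 /\ unit_steps t
  | _ => True
  end.

Fixpoint interior_within (Mz : Z) (l : list Z) : Prop :=
  match l with
  | _ :: ((y :: _ :: _) as t) => 0 <= y <= Mz /\ interior_within Mz t
  | _ => True
  end.

Fixpoint count_pairs (g : Z -> Z -> bool) (l : list Z) : nat :=
  match l with
  | x :: ((y :: _) as t) => (Nat.b2n (g x y) + count_pairs g t)%nat
  | _ => 0%nat
  end.

Fixpoint count_triples (f : Z -> Z -> Z -> bool) (l : list Z) : nat :=
  match l with
  | a :: ((b :: c :: _) as t) => (Nat.b2n (f a b c) + count_triples f t)%nat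
  | _ => 0%nat
  end.

Lemma count_pairs_cons g x y t :
  count_pairs g (x :: y :: t) = (Nat.b2n (g x y) + count_pairs g (y :: t))%nat.
Proof. reflexivity. Qed.

Lemma count_triples_cons f a b c t :
  count_triples f (a :: b :: c :: t) = (Nat.b2n (f a b c) + count_triples f (b :: c :: t))%nat.
Proof. reflexivity. Qed.

Definition up_step (z x y : Z) : bool := (x =? z - 1) && (y =? z).
Definition down_step (z x y : Z) : bool := (x =? z) && (y =? z - 1).
Definition peak (z a b c : Z) : bool := (a =? z - 1) && (b =? z) && (c =? z - 1).
Definition valley (z a b c : Z) : bool := (a =? z + 1) && (b =? z) && (c =? z + 1).
Definition rise (z a b c : Z) : bool := (a =? z - 1) && (b =? z) && (c =? z + 1).
Definition fall (z a b c : Z) : bool := (a =? z + 1) && (b =? z) && (c =? z - 1).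

Ltac decide_levels :=
  unfold up_step, down_step, peak, valley, rise, fall;
  repeat match goal with |- context [Z.eqb ?x ?y] => destruct (Z.eqb_spec x y) end;
  cbn [andb Nat.b2n]; try reflexivity; try lia.

(* Scanning with an open block of length cur (nonzero iff the previous entry is
   >= z), the number of blocks is the number of up steps into z, plus one for
   the open block. *)
Lemma block_count z : forall l prev cur,
  unit_steps (prev :: l) -> (cur = 0%nat <-> prev < z) ->
  length (block_lengths z l cur) =
    (count_pairs (up_step z) (prev :: l) + (if Nat.eqb cur 0 then 0 else 1))%nat.
Proof.
  induction l as [|a l IH]; intros prev cur Hs Hcur; [destruct cur; reflexivity|].
  destruct Hs as [Hstep Hs]. cbn [block_lengths]. rewrite count_pairs_cons.
  destruct (Z.leb_spec z a).
  - rewrite (IH a (S cur)) by (auto; split; intros; lia).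
    destruct cur as [|cur].
    + assert (prev < z) by (apply Hcur; reflexivity).
      assert (Hup : up_step z prev a = true) by decide_levels.
      rewrite Hup; cbn; lia.
    + assert (z <= prev) by (destruct (Z.lt_ge_cases prev z) as [H'|H'];
                             [apply Hcur in H'; discriminate | exact H']).
      assert (Hup : up_step z prev a = false) by decide_levels.
      rewrite Hup; cbn; lia.
  - assert (Hup : up_step z prev a = false) by decide_levels.
    rewrite Hup; destruct cur; cbn [Nat.eqb length];
      rewrite (IH a 0%nat) by (auto; split; intros; lia); cbn; lia.
Qed.

Definition is_long (c : nat) : bool := Nat.leb 2 c.

(* Same analysis for long blocks: an open block of length 1 was just entered
   from z-1, and a block of length >= 2 already contains its second entry; a
   block becomes long exactly when its first entry is a rise. *)
Lemma long_block_count z : forall l pprev prev cur,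
  unit_steps (prev :: l) -> (cur = 0%nat <-> prev < z) ->
  (cur = 1%nat -> pprev = z - 1 /\ prev = z) -> ((2 <= cur)%nat -> z <= pprev) ->
  length (filter is_long (block_lengths z l cur)) =
    (count_triples (rise z) (pprev :: prev :: l) + (if is_long cur then 1 else 0))%nat.
Proof.
  induction l as [|a l IH]; intros pprev prev cur Hs Hcur H1 H2;
    [destruct cur as [|[|]]; reflexivity|].
  destruct Hs as [Hstep Hs]. cbn [block_lengths]. rewrite count_triples_cons.
  destruct (Z.leb_spec z a).
  - assert (Hbelow : cur = 0%nat -> prev < z) by apply Hcur.
    assert (Habove : cur <> 0%nat -> z <= prev)
      by (intros Hne; destruct (Z.lt_ge_cases prev z) as [H'|H']; [apply Hcur in H'|]; lia).
    rewrite (IH prev a (S cur)) by (auto; try split; intros; try specialize (Hbelow ltac:(lia));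
                                    try specialize (Habove ltac:(lia)); lia).
    destruct cur as [|[|cur]].
    + assert (prev < z) by (apply Hcur; reflexivity).
      assert (Hr : rise z pprev prev a = false) by decide_levels.
      rewrite Hr; cbn; lia.
    + destruct (H1 eq_refl).
      assert (Hr : rise z pprev prev a = true) by decide_levels.
      rewrite Hr; cbn; lia.
    + assert (z <= pprev) by (apply H2; lia).
      assert (Hr : rise z pprev prev a = false) by decide_levels.
      rewrite Hr; cbn; lia.
  - assert (Hr : rise z pprev prev a = false) by decide_levels.
    rewrite Hr. destruct cur as [|cur]; cbn [Nat.eqb filter]; [|destruct (is_long (S cur))];
      cbn [length]; rewrite (IH prev a 0%nat) by (auto; try split; intros; lia); cbn; lia.
Qed.

Lemma count_pairs_by_next (g : Z -> Z -> bool) (f h : Z -> Z -> Z -> bool) e :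
  (forall x y c, Z.abs (y - x) = 1 -> Z.abs (c - y) = 1 ->
     Nat.b2n (g x y) = (Nat.b2n (f x y c) + Nat.b2n (h x y c))%nat) ->
  (forall x, g x e = false) ->
  forall l, unit_steps l -> last l 0 = e ->
  count_pairs g l = (count_triples f l + count_triples h l)%nat.
Proof.
  intros Hsplit Hend l. induction l as [|x [|y [|c t]] IH]; intros Hs Hl; try reflexivity.
  - cbn in Hl |- *. subst. rewrite Hend. reflexivity.
  - destruct Hs as [Hxy [Hyc Hs]].
    rewrite count_pairs_cons, !count_triples_cons, IH by (cbn; auto).
    rewrite (Hsplit x y c Hxy Hyc). lia.
Qed.

Lemma count_pairs_by_prev (g : Z -> Z -> bool) (f h : Z -> Z -> Z -> bool) :
  (forall x y c, Z.abs (y - x) = 1 -> Z.abs (c - y) = 1 ->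
     Nat.b2n (g y c) = (Nat.b2n (f x y c) + Nat.b2n (h x y c))%nat) ->
  forall t x y, unit_steps (x :: y :: t) ->
  count_pairs g (y :: t) = (count_triples f (x :: y :: t) + count_triples h (x :: y :: t))%nat.
Proof.
  intros Hsplit t. induction t as [|c t IH]; intros x y Hs; [reflexivity|].
  destruct Hs as [Hxy [Hyc Hs]].
  rewrite count_pairs_cons, !count_triples_cons, (IH y c) by (cbn; auto).
  rewrite (Hsplit x y c Hxy Hyc). lia.
Qed.

Lemma up_down_balance z : forall l x, unit_steps (x :: l) ->
  Z.of_nat (count_pairs (up_step z) (x :: l)) - Z.of_nat (count_pairs (down_step z) (x :: l)) =
  (if z <=? last (x :: l) 0 then 1 else 0) - (if z <=? x then 1 else 0).
Proof.
  induction l as [|a l IH]; intros x Hs; [cbn; lia|].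
  destruct Hs as [Hxa Hs].
  rewrite !count_pairs_cons, !Nat2Z.inj_add.
  change (last (x :: a :: l) 0) with (last (a :: l) 0).
  specialize (IH a Hs). revert IH.
  generalize (count_pairs (up_step z) (a :: l)) (count_pairs (down_step z) (a :: l))
    (last (a :: l) 0). intros U D e.
  destruct (Z.leb_spec z x), (Z.leb_spec z a), (Z.leb_spec z e); decide_levels.
Qed.

Lemma no_up_step_above Mz : forall l, interior_within Mz l -> last l 0 <= Mz ->
  count_pairs (up_step (Mz + 1)) l = 0%nat.
Proof.
  induction l as [|x [|y t] IH]; intros Hi Hl; try reflexivity.
  rewrite count_pairs_cons, IH.
  - assert (y <= Mz) by (destruct t; [exact Hl | apply Hi]).
    assert (Hup : up_step (Mz + 1) x y = false) by decide_levels.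
    rewrite Hup. reflexivity.
  - destruct t; [exact I | apply Hi].
  - exact Hl.
Qed.


(* k_z = P_z + U_z: an up step into z is followed by a peak or a rise. *)
Lemma up_steps_split z l : last l 0 < z -> unit_steps l ->
  count_pairs (up_step z) l = (count_triples (peak z) l + count_triples (rise z) l)%nat.
Proof.
  intros Hl Hs. apply (count_pairs_by_next _ _ _ (last l 0)); auto.
  - intros x y c Hxy Hyc. decide_levels.
  - intros x. decide_levels.
Qed.

(* k_(z+1) = V_z + U_z: an up step into z+1 starts at a valley or a rise. *)
Lemma up_steps_above_split z s y t : s < z -> unit_steps (s :: y :: t) ->
  count_pairs (up_step (z + 1)) (s :: y :: t) =
    (count_triples (valley z) (s :: y :: t) + count_triples (rise z) (s :: y :: t))%nat.
Proof.
  intros Hsz Hs.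
  assert (Hsplit : forall x y c, Z.abs (y - x) = 1 -> Z.abs (c - y) = 1 ->
            Nat.b2n (up_step (z + 1) y c) = (Nat.b2n (valley z x y c) + Nat.b2n (rise z x y c))%nat)
    by (intros; decide_levels).
  assert (Hfirst : up_step (z + 1) s y = false) by decide_levels.
  rewrite count_pairs_cons, Hfirst, (count_pairs_by_prev _ _ _ Hsplit t s y Hs). reflexivity.
Qed.

(* D_z = U_z: a path starting and ending below z has as many down steps as up
   steps at level z, and a down step from z starts at a peak or a fall. *)
Lemma falls_eq_rises z s y t : s < z -> last (s :: y :: t) 0 < z -> unit_steps (s :: y :: t) ->
  count_triples (fall z) (s :: y :: t) = count_triples (rise z) (s :: y :: t).
Proof.
  intros Hsz Hl Hs.
  assert (Hdown : count_pairs (down_step z) (s :: y :: t) =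
            (count_triples (peak z) (s :: y :: t) + count_triples (fall z) (s :: y :: t))%nat).
  { assert (Hsplit : forall x y c, Z.abs (y - x) = 1 -> Z.abs (c - y) = 1 ->
              Nat.b2n (down_step z y c) = (Nat.b2n (peak z x y c) + Nat.b2n (fall z x y c))%nat)
      by (intros; decide_levels).
    assert (Hfirst : down_step z s y = false) by decide_levels.
    rewrite count_pairs_cons, Hfirst, (count_pairs_by_prev _ _ _ Hsplit t s y Hs). reflexivity. }
  pose proof (up_down_balance z (y :: t) s Hs) as Hbal.
  rewrite up_steps_split in Hbal by assumption.
  destruct (Z.leb_spec z (last (s :: y :: t) 0)), (Z.leb_spec z s); lia.
Qed.

Lemma kappa_as_up_steps n s t : s < Z.of_nat n -> unit_steps (s :: t) ->
  kappa (s :: t) n = count_pairs (up_step (Z.of_nat n)) (s :: t).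
Proof.
  intros Hsn Hs. unfold kappa. cbn [block_lengths].
  destruct (Z.leb_spec (Z.of_nat n) s); [lia|]. cbn [Nat.eqb].
  rewrite (block_count _ t s 0%nat Hs) by (split; intros; lia). cbn; lia.
Qed.

Lemma beta_as_rises n s t : s < Z.of_nat n -> unit_steps (s :: t) ->
  beta (s :: t) n = count_triples (rise (Z.of_nat n)) (s :: t).
Proof.
  intros Hsn Hs. unfold beta. change (fun c => Nat.leb 2 c) with is_long. cbn [block_lengths].
  destruct (Z.leb_spec (Z.of_nat n) s); [lia|]. cbn [Nat.eqb].
  rewrite (long_block_count _ t s s 0%nat Hs) by (try split; intros; lia).
  destruct t as [|y t]; [reflexivity|].
  rewrite count_triples_cons.
  assert (Hr : rise (Z.of_nat n) s s y = false) by decide_levels.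
  rewrite Hr. cbn; lia.
Qed.

(* tilde kappa counts the up steps into level n + 1, also for n = M where both
   sides vanish. *)
Lemma kappa_tilde_as_up_steps M n s t : (n <= M)%nat -> s < Z.of_nat n ->
  unit_steps (s :: t) -> interior_within (Z.of_nat M) (s :: t) -> last (s :: t) 0 <= Z.of_nat M ->
  kappa_tilde M (s :: t) n = count_pairs (up_step (Z.of_nat n + 1)) (s :: t).
Proof.
  intros HnM Hsn Hs Hi Hl. unfold kappa_tilde. destruct (Nat.ltb_spec n M).
  - rewrite kappa_as_up_steps by (auto; lia). f_equal. f_equal. lia.
  - replace n with M by lia. symmetry. apply no_up_step_above; assumption.
Qed.

End Paths.

Definition prod_list (s : list nat) (f : nat -> R) : R :=
  fold_right (fun n acc => f n * acc) 1 s.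

Lemma prod_list_cons a s f : prod_list (a :: s) f = f a * prod_list s f.
Proof. reflexivity. Qed.

Lemma prod_list_ext s f g : (forall n, In n s -> f n = g n) -> prod_list s f = prod_list s g.
Proof.
  induction s as [|a s IH]; intros H; [reflexivity|].
  rewrite !prod_list_cons, H, IH; [reflexivity | intros n Hn; apply H | ]; cbn; auto.
Qed.

Lemma prod_list_mul s f g : prod_list s (fun n => f n * g n) = prod_list s f * prod_list s g.
Proof. induction s as [|a s IH]; [cbn; ring|]. rewrite !prod_list_cons, IH. ring. Qed.

Lemma prod_list_unit s f : (forall n, In n s -> f n = 1) -> prod_list s f = 1.
Proof.
  induction s as [|a s IH]; intros H; [reflexivity|].
  rewrite prod_list_cons, H, IH; [ring | intros n Hn; apply H | ]; cbn; auto.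
Qed.

Lemma prod_list_single s k f : NoDup s -> In k s -> (forall n, In n s -> n <> k -> f n = 1) ->
  prod_list s f = f k.
Proof.
  induction s as [|a s IH]; intros Hnd Hk H; [destruct Hk|].
  inversion Hnd as [|? ? Ha Hnd']; subst. rewrite prod_list_cons. destruct Hk as [<-|Hk].
  - rewrite prod_list_unit; [ring|].
    intros n Hn. apply H; [right; exact Hn | intros ->; contradiction].
  - rewrite IH, H; auto; [ring | left; reflexivity | intros ->; contradiction |].
    intros n Hn Hne. apply H; [right; exact Hn | exact Hne].
Qed.

Section LevelWeights.
Variable Rc : nat -> R.

Definition level_weight (l : list Z) (n : nat) : R :=
  let z := Z.of_nat n in
  (- Rc n) ^ count_triples (valley z) l * Rc n ^ count_triples (peak z) l *
  Tc Rc n ^ (count_triples (rise z) l + count_triples (fall z) l).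

Definition local_weight (a b c : Z) (n : nat) : R :=
  let z := Z.of_nat n in
  (- Rc n) ^ Nat.b2n (valley z a b c) * Rc n ^ Nat.b2n (peak z a b c) *
  Tc Rc n ^ (Nat.b2n (rise z a b c) + Nat.b2n (fall z a b c)).

Lemma level_weight_cons a b c t n :
  level_weight (a :: b :: c :: t) n = local_weight a b c n * level_weight (b :: c :: t) n.
Proof. unfold level_weight, local_weight. rewrite !count_triples_cons, !pow_add. ring. Qed.

Lemma local_weight_off_level a b c n : Z.of_nat n <> b -> local_weight a b c n = 1.
Proof.
  intros Hne. unfold local_weight, valley, peak, rise, fall.
  destruct (Z.eqb_spec b (Z.of_nat n)); [lia|].
  rewrite !andb_false_r. cbn. ring.
Qed.

Lemma wloc_local_weight a c k :
  Z.abs (Z.of_nat k - a) = 1%Z -> Z.abs (c - Z.of_nat k) = 1%Z ->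
  wloc Rc a (Z.of_nat k) c = local_weight a (Z.of_nat k) c k.
Proof.
  intros Hak Hkc. unfold wloc, local_weight, valley, peak, rise, fall, Tc.
  rewrite Nat2Z.id, Z.eqb_refl, !andb_true_r.
  destruct (Z.eqb_spec a (Z.of_nat k - 1)), (Z.eqb_spec c (Z.of_nat k - 1)),
    (Z.eqb_spec a (Z.of_nat k + 1)), (Z.eqb_spec c (Z.of_nat k + 1));
    try lia; cbn; ring.
Qed.

Lemma weight_as_level_product M : forall l, unit_steps l -> interior_within (Z.of_nat M) l ->
  weight Rc l = prod_list (seq 0 (S M)) (level_weight l).
Proof.
  induction l as [|a [|b [|c t]] IH]; intros Hs Hi;
    try (symmetry; apply prod_list_unit; intros; unfold level_weight; cbn; ring).
  destruct Hs as [Hab [Hbc Hs]]. destruct Hi as [Hb Hi].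
  change (weight Rc (a :: b :: c :: t)) with (wloc Rc a b c * weight Rc (b :: c :: t)).
  rewrite IH by (cbn; auto).
  rewrite (prod_list_ext _ _ _ (fun n _ => level_weight_cons a b c t n)), prod_list_mul.
  rewrite (prod_list_single _ (Z.to_nat b) (local_weight a b c)).
  - pose proof (wloc_local_weight a c (Z.to_nat b)) as Hloc.
    rewrite Z2Nat.id in Hloc by lia. rewrite Hloc by lia. reflexivity.
  - apply seq_NoDup.
  - apply in_seq. lia.
  - intros n _ Hne. apply local_weight_off_level. intros <-. apply Hne. lia.
Qed.

End LevelWeights.

Lemma powerRZ_exponents (x y w : R) (kt k b V P U D : nat) :
  kt = (V + U)%nat -> k = (P + U)%nat -> b = U -> D = U ->
  powerRZ x (Z.of_nat kt - Z.of_nat b) * powerRZ y (Z.of_nat k - Z.of_nat b) *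
  powerRZ w (2 * Z.of_nat b) = x ^ V * y ^ P * w ^ (U + D).
Proof.
  intros -> -> -> ->.
  replace (Z.of_nat (V + U) - Z.of_nat U)%Z with (Z.of_nat V) by lia.
  replace (Z.of_nat (P + U) - Z.of_nat U)%Z with (Z.of_nat P) by lia.
  replace (2 * Z.of_nat U)%Z with (Z.of_nat (U + U)) by lia.
  rewrite <- !pow_powerRZ. reflexivity.
Qed.

Lemma unit_steps_of_nth : forall l,
  (forall j, (j + 1 < length l)%nat -> Z.abs (nth (j + 1) l 0%Z - nth j l 0%Z) = 1%Z) ->
  unit_steps l.
Proof.
  induction l as [|x [|y t] IH]; intros H; try exact I. split.
  - apply (H 0%nat). cbn; lia.
  - apply IH. intros j Hj. apply (H (S j)). cbn in *; lia.
Qed.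

Lemma interior_within_of_nth Mz : forall l,
  (forall j, (1 <= j < length l - 1)%nat -> (0 <= nth j l 0%Z <= Mz)%Z) ->
  interior_within Mz l.
Proof.
  induction l as [|x [|y [|c t]] IH]; intros H; try exact I. split.
  - apply (H 1%nat). cbn; lia.
  - apply IH. intros j Hj. apply (H (S j)). cbn in *; lia.
Qed.

Lemma scattering_seq_path M p : scattering_seq M p ->
  exists y t, p = (-1)%Z :: y :: t /\ unit_steps p /\
    interior_within (Z.of_nat M) p /\ last p 0%Z = (-1)%Z.
Proof.
  intros (Hlen & Hhd & Hlast & Hin & Hst).
  destruct p as [|x [|y t]]; cbn in Hlen; try lia.
  cbn in Hhd. subst x. exists y, t.
  auto using unit_steps_of_nth, interior_within_of_nth.
Qed.

Lemma level_factor M Rc s y t n : (n <= M)%nat -> (s < 0)%Z -> (last (s :: y :: t) 0 < 0)%Z ->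
  unit_steps (s :: y :: t) -> interior_within (Z.of_nat M) (s :: y :: t) ->
  powerRZ (- Rc n) (Z.of_nat (kappa_tilde M (s :: y :: t) n) - Z.of_nat (beta (s :: y :: t) n)) *
  powerRZ (Rc n) (Z.of_nat (kappa (s :: y :: t) n) - Z.of_nat (beta (s :: y :: t) n)) *
  powerRZ (Tc Rc n) (2 * Z.of_nat (beta (s :: y :: t) n)) = level_weight Rc (s :: y :: t) n.
Proof.
  intros HnM Hs0 Hl Hs Hi.
  assert (Hsn : (s < Z.of_nat n)%Z) by lia.
  assert (Hln : (last (s :: y :: t) 0 < Z.of_nat n)%Z) by lia.
  apply powerRZ_exponents.
  - rewrite kappa_tilde_as_up_steps by (auto; lia).
    apply up_steps_above_split; assumption.
  - rewrite kappa_as_up_steps by assumption.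
    apply up_steps_split; assumption.
  - apply beta_as_rises; assumption.
  - apply falls_eq_rises; assumption.
Qed.

Theorem lemma6p2 (M : nat) (Rc : nat -> R) (p : list Z)
  (hM : (1 <= M)%nat)
  (hR : forall n, (n <= M)%nat -> -1 < Rc n < 1)
  (hp : scattering_seq M p) :
  weight Rc p = rhs M Rc p.
Proof.
  destruct (scattering_seq_path M p hp) as (y & t & -> & Hs & Hi & Hl).
  rewrite (weight_as_level_product Rc M _ Hs Hi).
  unfold rhs, prod_0_M. fold (prod_list (seq 0 (S M))).
  apply prod_list_ext. intros n Hn. apply in_seq in Hn.
  symmetry. apply level_factor; auto; lia.
Qed.
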